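(* Let $\mathcal{G}\subseteq\mathbb{N}$ be a finite set with $0\in\mathcal{G}$, let $\lambda\in\mathbb{N}$, let $L=\max\mathcal{G}+\lambda$, and let $\mathcal{D}=\mathcal{G}\cup(\max\mathcal{G}-\mathcal{G}+\lambda)$. Then the following are equivalent: (i) $\mathcal{D}+\mathcal{D}=\{0,1,\ldots,2L\}$; (ii) $\mathcal{D}-\mathcal{D}=\{-L,\ldots,L\}$; (iii) both of the following conditions hold: (C1) $(\mathcal{G}-\mathcal{G})\cup(\mathcal{G}+\mathcal{G}-L)\cup(L-(\mathcal{G}+\mathcal{G}))\supseteq\{0,1,\ldots,\max\mathcal{G}\}$; (C2) $\mathcal{G}+\mathcal{G}\supseteq\{0,1,\ldots,\lambda-1\}$ (vacuous if $\lambda=0$).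
   Context: For sets $\mathcal{A},\mathcal{B}\subseteq\mathbb{Z}$ and $c\in\mathbb{Z}$: $\mathcal{A}+\mathcal{B}=\{a+b: a\in\mathcal{A},b\in\mathcal{B}\}$, $\mathcal{A}-\mathcal{B}=\{a-b\}$, $\mathcal{A}+c=\{a+c\}$, $c-\mathcal{A}=\{c-a\}$. The set $\mathcal{D}=\mathcal{G}\cup(\max\mathcal{G}-\mathcal{G}+\lambda)$ is called the symmetric array with generator $\mathcal{G}$ and shift $\lambda$ (S-$\mathcal{G}$); its aperture is $\max\mathcal{D}=L=\max\mathcal{G}+\lambda$. *)

From Stdlib Require Import ZArith List.
Open Scope Z_scope.

(* maximum of a finite list of integers (0 for the empty list; only used on
   nonempty lists of nonnegative integers) *)
Definition maxZ (G : list Z) : Z := fold_right Z.max 0 G.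

Definition in_sum (A B : list Z) (x : Z) : Prop :=
  exists a b, In a A /\ In b B /\ x = a + b.
Definition in_diff (A B : list Z) (x : Z) : Prop :=
  exists a b, In a A /\ In b B /\ x = a - b.

Definition symArray (G : list Z) (lam : Z) : list Z :=
  G ++ map (fun g => maxZ G - g + lam) G.

From Stdlib Require Import ZArith List Lia.
Open Scope Z_scope.

(* Write M = max G and L = M + λ.  The symmetric array
   D = G ∪ (M - G + λ) lies in [0, L] and is symmetric about L (d ∈ D iff
   L - d ∈ D).  For any set symmetric about c the sumset is the difference
   set shifted by c, so D + D = (D - D) + L, which gives (i) ⇔ (ii) at once.
   Splitting D into its two halves, the difference set D - D is exactly
     covered(x) := x ∈ (G - G) ∪ (G + G - L) ∪ (L - (G + G)).
   Since D - D is closed under negation and bounded by L, condition (ii)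
   amounts to covered(x) for every 0 ≤ x ≤ L.  For x ≤ M this is (C1);
   for M < x ≤ L the first two alternatives are impossible for size reasons,
   and covered(x) says L - x ∈ G + G with 0 ≤ L - x < λ, which is (C2). *)

Lemma maxZ_upper (G : list Z) (g : Z) : In g G -> g <= maxZ G.
Proof.
  induction G as [|a G IH]; simpl; [tauto|].
  intros [->|Hg]; [lia|]. specialize (IH Hg); lia.
Qed.

Lemma maxZ_nonneg (G : list Z) : 0 <= maxZ G.
Proof. induction G as [|a G IH]; simpl; lia. Qed.

Lemma in_diff_opp (A : list Z) (x : Z) : in_diff A A x -> in_diff A A (- x).
Proof.
  intros (a & b & Ha & Hb & ->). exists b, a; repeat split; auto; lia.
Qed.

Lemma in_diff_bounds (A : list Z) (c x : Z) :
  (forall a, In a A -> 0 <= a <= c) -> in_diff A A x -> - c <= x <= c.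
Proof.
  intros HA (a & b & Ha & Hb & ->). apply HA in Ha; apply HA in Hb; lia.
Qed.

(* For a set symmetric about c, A + A is the difference set shifted by c:
   a + b = a - (c - b) + c. *)
Lemma in_sum_symmetric (A : list Z) (c x : Z) :
  (forall a, In a A -> In (c - a) A) ->
  in_sum A A x <-> in_diff A A (x - c).
Proof.
  intros Hsym; split.
  - intros (a & b & Ha & Hb & ->).
    exists a, (c - b); repeat split; auto; lia.
  - intros (a & b & Ha & Hb & E).
    exists a, (c - b); repeat split; auto; lia.
Qed.

Lemma in_symArray (G : list Z) (lam d : Z) :
  In d (symArray G lam) <-> In d G \/ exists g, In g G /\ d = maxZ G - g + lam.
Proof.
  unfold symArray. rewrite in_app_iff, in_map_iff.
  split; intros [Hd|(g & E & Hg)]; auto; right; exists g; auto.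
Qed.

Definition covered (G : list Z) (L x : Z) : Prop :=
  in_diff G G x \/ in_sum G G (x + L) \/ in_sum G G (L - x).

Section SymmetricArray.

Variables (G : list Z) (lam : Z).
Hypothesis G_nonneg : forall g, In g G -> 0 <= g.
Hypothesis lam_nonneg : 0 <= lam.

Local Notation M := (maxZ G).
Local Notation L := (maxZ G + lam).
Local Notation D := (symArray G lam).

Lemma G_bounds (g : Z) : In g G -> 0 <= g <= M.
Proof. intros Hg; split; [apply G_nonneg | apply maxZ_upper]; auto. Qed.

Lemma symArray_bounds (d : Z) : In d D -> 0 <= d <= L.
Proof.
  rewrite in_symArray. intros [Hd|(g & Hg & ->)].
  - apply G_bounds in Hd; lia.
  - apply G_bounds in Hg; lia.
Qed.

Lemma symArray_symmetric (d : Z) : In d D -> In (L - d) D.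
Proof.
  rewrite !in_symArray. intros [Hd|(g & Hg & ->)].
  - right; exists d; split; auto; lia.
  - left; replace (M + lam - (M - g + lam)) with g by lia; exact Hg.
Qed.

Lemma in_diff_symArray (x : Z) : in_diff D D x <-> covered G L x.
Proof.
  unfold covered; split.
  - intros (a & b & Ha & Hb & ->). apply in_symArray in Ha; apply in_symArray in Hb.
    destruct Ha as [Ha|(g1 & Ha & ->)]; destruct Hb as [Hb|(g2 & Hb & ->)].
    + left; exists a, b; auto.
    + right; left; exists a, g2; repeat split; auto; lia.
    + right; right; exists g1, b; repeat split; auto; lia.
    + left; exists g2, g1; repeat split; auto; lia.
  - intros [(a & b & Ha & Hb & ->)|[(a & b & Ha & Hb & E)|(a & b & Ha & Hb & E)]].
    + exists a, b; repeat split; auto; apply in_symArray; auto.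
    + exists a, (M - b + lam); repeat split; [| |lia];
        apply in_symArray; eauto.
    + exists (M - a + lam), b; repeat split; [| |lia];
        apply in_symArray; eauto.
Qed.

(* Above max G only the third alternative of covered can occur, since
   G - G ⊆ [-M, M] and G + G ⊆ [0, 2M]. *)
Lemma covered_above_max (x : Z) :
  M < x <= L -> covered G L x <-> in_sum G G (L - x).
Proof.
  intros Hx; unfold covered; split; [|auto].
  intros [(a & b & Ha & Hb & E)|[(a & b & Ha & Hb & E)|Hs]]; auto;
    apply G_bounds in Ha; apply G_bounds in Hb; lia.
Qed.

Lemma diff_full_iff :
  (forall x, in_diff D D x <-> - L <= x <= L) <->
  (forall x, 0 <= x <= L -> covered G L x).
Proof.
  split.
  - intros Hfull x Hx. apply in_diff_symArray, Hfull; lia.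
  - intros Hcov x; split; [apply in_diff_bounds, symArray_bounds|].
    intros Hx. destruct (Z_le_gt_dec 0 x) as [Hpos|Hneg].
    + apply in_diff_symArray, Hcov; lia.
    + replace x with (- - x) by lia.
      apply in_diff_opp, in_diff_symArray, Hcov; lia.
Qed.

Lemma covered_range_iff :
  (forall x, 0 <= x <= L -> covered G L x) <->
  (forall x, 0 <= x <= M -> covered G L x) /\
  (forall x, 0 <= x <= lam - 1 -> in_sum G G x).
Proof.
  split.
  - intros Hcov; split.
    + intros x Hx; apply Hcov; lia.
    + intros x Hx. pose proof (maxZ_nonneg G).
      replace x with (L - (L - x)) by lia.
      apply covered_above_max, Hcov; lia.
  - intros [C1 C2] x Hx. destruct (Z_le_gt_dec x M).
    + apply C1; lia.
    + apply covered_above_max; [lia|]. apply C2; lia.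
Qed.

End SymmetricArray.

Theorem mainTheorem3 (G : list Z) (lam : Z)
  (HGnat : forall g, In g G -> 0 <= g)
  (HG0 : In 0 G)
  (Hlam : 0 <= lam) :
  let L := maxZ G + lam in
  let D := symArray G lam in
  ((forall x, in_sum D D x <-> 0 <= x <= 2 * L) <->
   (forall x, in_diff D D x <-> - L <= x <= L)) /\
  ((forall x, in_diff D D x <-> - L <= x <= L) <->
   ((forall x, 0 <= x <= maxZ G ->
       in_diff G G x \/ in_sum G G (x + L) \/ in_sum G G (L - x)) /\
    (forall x, 0 <= x <= lam - 1 -> in_sum G G x))).
Proof.
  intros L D.
  assert (Hsum : forall x, in_sum D D x <-> in_diff D D (x - L))
    by (intros x; apply in_sum_symmetric, symArray_symmetric).
  split.
  - split; intros Hfull x.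
    + specialize (Hfull (x + L)). rewrite Hsum, Z.add_simpl_r in Hfull.
      rewrite Hfull. lia.
    + rewrite Hsum, Hfull. lia.
  - subst L D. rewrite diff_full_iff by assumption.
    exact (covered_range_iff G lam HGnat Hlam).
Qed.
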